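(* Let $\epsilon>0$ and let $\Delta\ge 1$ be an integer. There exists a deterministic distributed algorithm (in the synchronous port-numbering model described in the context) which, on every edge-weighted bicoloured graph of maximum degree at most $\Delta$ with positive edge weights, terminates after $T\le 4+2\Delta/\epsilon$ synchronous communication steps and outputs a matching $M$ with $w(M^* )\le (2+\epsilon)\,w(M)$, where $M^*$ is a maximum-weight matching of the graph.
   Context: A bicoloured graph is a simple undirected bipartite graph $\mathcal{G}=(R\cup B,E)$ with red nodes $R$ and blue nodes $B$ (every edge joins a red and a blue node), without isolated nodes; $\Delta$ is its maximum degree. Each edge $e$ has a positive weight $w(e)$, and for a set of edges $F$, $w(F)=\sum_{e\in F}w(e)$. A matching is a set of edges no two sharing a node; a maximum-weight matching is one of maximum total weight. The preferences of each node are determined by the weights: a node prefers heavier incident edges (the heaviest edge is most preferred). Distributed model: $\mathcal{G}$ is the communication graph. Initially each node $v$ knows only its colour, its degree $d(v)$, and $T$; $v$ has $d(v)$ ports to its neighbours, numbered according to $v$'s preference order (i.e., by decreasing weight of the incident edges). There are no node identifiers. Computation is synchronous: in each step every node receives messages from neighbours, computes deterministically, and sends a message to each neighbour. After $T$ steps each node outputs its partner (if any), consistently, defining a matching. *)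

From HB Require Import structures.
From mathcomp Require Import all_boot all_order all_algebra.
From mathcomp Require Import reals.
Set Implicit Arguments. Unset Strict Implicit. Unset Printing Implicit Defensive.
Import Order.TTheory GRing.Theory Num.Theory.
Local Open Scope ring_scope.

Section Graphs.
Variables (R : realType) (V : finType).

(** Bicoloured graph: node set V, colour [red] (true = red, false = blue),
    adjacency [adj], edge weights [w] (only values on edges matter). *)
Definition deg (adj : rel V) (v : V) : nat := #|[pred u | adj v u]|.

Definition bicoloured_graph (red : V -> bool) (adj : rel V) : Prop :=
  [/\ symmetric adj, irreflexive adj,
      (forall u v, adj u v -> red u != red v) &
      (forall v, exists u, adj v u) ].

Definition positive_weights (adj : rel V) (w : V -> V -> R) : Prop :=
  forall u v, adj u v -> w u v = w v u /\ 0 < w u v.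

Definition max_degree_le (adj : rel V) (Delta : nat) : Prop :=
  forall v, (deg adj v <= Delta)%N.

(** A port numbering: [port v i] is the neighbour of v reached through port i
    (for i < deg v); it is a bijection onto the neighbours of v and is ordered
    by decreasing weight (port 0 = most preferred = heaviest edge). *)
Definition valid_ports (adj : rel V) (w : V -> V -> R) (port : V -> nat -> V) : Prop :=
  [/\ (forall v i, (i < deg adj v)%N -> adj v (port v i)),
      (forall v i j, (i < deg adj v)%N -> (j < deg adj v)%N ->
                     port v i = port v j -> i = j),
      (forall v u, adj v u -> exists2 i, (i < deg adj v)%N & port v i = u) &
      (forall v i j, (i <= j)%N -> (j < deg adj v)%N ->
                     w v (port v j) <= w v (port v i)) ].

Definition pidx (adj : rel V) (port : V -> nat -> V) (v u : V) : nat :=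
  index u (mkseq (port v) (deg adj v)).

Definition is_matching (red : V -> bool) (adj : rel V) (M : {set V * V}) : Prop :=
  (forall e, e \in M -> [/\ red e.1, ~~ red e.2 & adj e.1 e.2]) /\
  (forall e f, e \in M -> f \in M -> (e.1 = f.1 \/ e.2 = f.2) -> e = f).

Definition mweight (w : V -> V -> R) (M : {set V * V}) : R :=
  \sum_(e in M) w e.1 e.2.

End Graphs.

(** A deterministic anonymous synchronous algorithm in the port-numbering
    model.  [a_init T c d]: initial state of a node knowing T, its colour c and
    its degree d.  In each step a node in state s sends [a_send s i] on its
    port i, and then moves to [a_recv s m] where [m i] is the message received
    on its port i.  After the last step it outputs [a_out s] : the port number
    of its partner, or None. *)
Record algorithm := Algorithm {
  St : Type;
  Msg : Type;
  a_init : nat -> bool -> nat -> St;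
  a_send : St -> nat -> Msg;
  a_recv : St -> (nat -> Msg) -> St;
  a_out : St -> option nat }.

Section Run.
Variables (A : algorithm) (T : nat) (V : finType)
          (red : V -> bool) (adj : rel V) (port : V -> nat -> V).

Fixpoint state (t : nat) (v : V) : St A :=
  match t with
  | 0 => @a_init A T (red v) (deg adj v)
  | t'.+1 =>
      @a_recv A (state t' v)
        (fun i => let u := port v i in @a_send A (state t' u) (pidx adj port u v))
  end.

Definition output (v : V) : option nat := @a_out A (state T v).

Definition consistent_output : Prop :=
  forall v i, output v = Some i ->
    (i < deg adj v)%N /\ output (port v i) = Some (pidx adj port (port v i) v).

Definition output_matching : {set V * V} :=
  [set e : V * V | red e.1 &&
     (if output e.1 is Some i then port e.1 i == e.2 else false)].

End Run.

From HB Require Import structures.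
From mathcomp Require Import all_boot all_order all_algebra.
From mathcomp Require Import reals.
From mathcomp Require Import lra.
Import Order.TTheory GRing.Theory Num.Theory.
Local Open Scope ring_scope.
Set Implicit Arguments. Unset Strict Implicit. Unset Printing Implicit Defensive.

(* Red nodes propose along their ports in order of decreasing weight; in each
   round of two steps every blue node holds its best current proposal and the
   rejected red nodes move on to their next port.  The held proposals form a
   matching M_i of weight H_i, the total weight held by blue nodes.  Held
   weights never decrease, and the weight a blue node holds dominates every
   edge that a red node has already passed on its way down.  So every matching
   N satisfies w(N) <= A_i + H_i, where A_i is the total weight of the current
   proposals.  The potential Phi_i, summing over the red nodes the weights held
   behind their passed ports, grows by at least A_{i+1} - H_{i+1} per round,
   and Phi_i <= Delta H_i since each blue node lies behind at most Delta ports.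
   Hence k (A_k - H_k) <= Delta H_k, and k > Delta / eps rounds give
   w(N) <= (2 + eps) H_k. *)

Definition first_port (d : nat) (p : pred nat) : option nat :=
  let j := find p (iota 0 d) in if (j < d)%N then Some j else None.

Lemma first_portP d (p : pred nat) j : first_port d p = Some j -> (j < d)%N /\ p j.
Proof.
rewrite /first_port; case: ifP => // lt_jd [<-]; split => //.
have hasp : has p (iota 0 d) by rewrite has_find size_iota.
by have := nth_find 0 hasp; rewrite nth_iota.
Qed.

Lemma first_port_le d (p : pred nat) j0 :
  p j0 -> (j0 < d)%N -> exists2 j, first_port d p = Some j & (j <= j0)%N.
Proof.
move=> pj0 lt_j0d; rewrite /first_port.
have le_j0 : (find p (iota 0 d) <= j0)%N.
  by rewrite leqNgt; apply/negP => /(before_find 0); rewrite nth_iota // pj0.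
by rewrite (leq_ltn_trans le_j0 lt_j0d); exists (find p (iota 0 d)).
Qed.

Lemma ler_sum_nat_widen (R : numDomainType) (f g : nat -> R) m n :
  (m <= n)%N -> (forall j, f j <= g j) -> (forall j, 0 <= g j) ->
  \sum_(0 <= j < m) f j <= \sum_(0 <= j < n) g j.
Proof.
move=> le_mn le_fg g_ge0; rewrite (@big_cat_nat _ _ _ m 0 n) //=.
by rewrite -[leLHS]addr0 lerD ?sumr_ge0 ?ler_sum.
Qed.

Lemma ler_sum_subset (R : numDomainType) (T : finType) (A : {set T}) (P : pred T)
    (f : T -> R) :
  (forall x, x \in A -> P x) -> (forall x, 0 <= f x) ->
  \sum_(x in A) f x <= \sum_(x | P x) f x.
Proof.
move=> sub_AP f_ge0; rewrite [leLHS]big_mkcond [leRHS]big_mkcond ler_sum // => x _.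
by case: ifP => [/sub_AP -> // | _]; case: ifP.
Qed.

(* A red node proposes through port [p_target], moving on only when rejected;
   a blue node records in [p_held] the port of the proposal it holds.  Blue
   nodes choose at even clock values, red nodes learn the answer at odd ones.
   A message on a port says "I propose to you" and "I hold your proposal". *)
Record pstate := PState {
  p_red : bool; p_deg : nat; p_clock : nat;
  p_target : nat; p_accepted : bool; p_held : option nat }.

Definition prop_init (_ : nat) (c : bool) (d : nat) : pstate :=
  PState c d 0 0 false None.

Definition prop_send (s : pstate) (i : nat) : bool * bool :=
  (i == p_target s, p_held s == Some i).

Definition prop_recv (s : pstate) (m : nat -> bool * bool) : pstate :=
  let: PState c d t p a hd := s in
  if c && odd t then
    let a' := (p < d)%N && (m p).2 in
    PState c d t.+1 (if a' || (d <= p)%N then p else p.+1) a' hd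
  else if c || odd t then PState c d t.+1 p a hd
  else PState c d t.+1 p a (first_port d (fun j => (m j).1)).

Definition prop_out (s : pstate) : option nat :=
  if p_red s then (if p_accepted s then Some (p_target s) else None) else p_held s.

Definition proposal_algorithm : algorithm :=
  Algorithm prop_init prop_send prop_recv prop_out.

Section Ports.
Variables (R : realType) (V : finType) (adj : rel V) (w : V -> V -> R)
  (port : V -> nat -> V).
Hypothesis ports_ok : valid_ports adj w port.

Local Notation d := (deg adj).
Local Notation pix := (pidx adj port).

Lemma adj_port v i : (i < d v)%N -> adj v (port v i).
Proof. by case: ports_ok => + _ _ _; apply. Qed.

Lemma pidxP v u : adj v u -> (pix v u < d v)%N /\ port v (pix v u) = u.
Proof.
case: ports_ok => _ _ onto _ /onto [i lt_id <-].
have mem_i : port v i \in mkseq (port v) (d v).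
  by apply/mapP; exists i; rewrite ?mem_iota.
have lt_idx : (pix v (port v i) < d v)%N.
  by rewrite /pidx -[X in (_ < X)%N](size_mkseq (port v)) index_mem.
by split=> //; have := nth_index (port v i) mem_i; rewrite nth_mkseq.
Qed.

Lemma pidx_port v i : (i < d v)%N -> pix v (port v i) = i.
Proof.
move=> lt_id; have [lt_pd eq_port] := pidxP (adj_port lt_id).
by case: ports_ok => _ inj _ _; exact: inj lt_pd lt_id eq_port.
Qed.

Lemma w_port_le v i j : (i <= j)%N -> (j < d v)%N ->
  w v (port v j) <= w v (port v i).
Proof. by case: ports_ok => _ _ _; apply. Qed.

Lemma sum_ports (f : V -> R) v :
  \sum_(j < d v) f (port v j) = \sum_(u | adj v u) f u.
Proof.
have uniq_ports : uniq (mkseq (port v) (d v)).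
  rewrite map_inj_in_uniq ?iota_uniq // => i j; rewrite !mem_iota !add0n.
  by case: ports_ok => _ inj _ _ /= /inj; apply.
rewrite -(big_mkord xpredT (f \o port v)) /index_iota subn0.
rewrite -(big_map (port v) xpredT f) (big_uniq _ uniq_ports) /=.
apply: eq_bigl => u; apply/mapP/idP => [[i] | /pidxP [lt_pd <-]].
  by rewrite mem_iota => /adj_port + ->.
by exists (pix v u); rewrite ?mem_iota.
Qed.

End Ports.

Section Run.
Variables (R : realType) (V : finType) (red : V -> bool) (adj : rel V)
  (w : V -> V -> R) (port : V -> nat -> V).
Hypotheses (graph_ok : bicoloured_graph red adj)
  (ports_ok : valid_ports adj w port).

Local Notation d := (deg adj).
Local Notation pix := (pidx adj port).
Local Notation adj_port := (adj_port ports_ok).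
Local Notation pidxP := (pidxP ports_ok).
Local Notation pidx_port := (pidx_port ports_ok).

Lemma adj_sym u v : adj u v -> adj v u.
Proof. by case: graph_ok => sym _ _ _; rewrite sym. Qed.

Lemma red_adj u v : red u -> adj u v -> ~~ red v.
Proof. by case: graph_ok => _ _ col _ ru /col; rewrite ru. Qed.

Lemma blue_adj u v : ~~ red u -> adj u v -> red v.
Proof. by case: graph_ok => _ _ col _ /negbTE ru /col; rewrite ru; case: (red v). Qed.

(* The horizon only enters [prop_init], which ignores it. *)
Definition run t v := state proposal_algorithm 0 red adj port t v.

Lemma output_run T v : output proposal_algorithm T red adj port v = prop_out (run T v).
Proof. by []. Qed.

Lemma run_succ t v : run t.+1 v =
  prop_recv (run t v) (fun i => prop_send (run t (port v i)) (pix (port v i) v)).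
Proof. by []. Qed.
Arguments run : simpl never.

Lemma run_eta t v : run t v =
  PState (red v) (d v) t (p_target (run t v)) (p_accepted (run t v)) (p_held (run t v)).
Proof.
suff: [/\ p_red (run t v) = red v, p_deg (run t v) = d v & p_clock (run t v) = t].
  by case: (run t v) => ? ? ? ? ? ? /= [-> -> ->].
elim: t => [|t IH] //; rewrite run_succ.
by case: (run t v) IH => c dg tc p a hd /= [-> -> ->]; case: (red v); case: (odd t).
Qed.

Definition target i v := p_target (run i.*2 v).
Definition accepted i v := p_accepted (run i.*2 v).
Definition held i v := p_held (run i.*2 v).

Lemma held_red i v : red v -> held i v = None.
Proof.
move=> rv; rewrite /held; elim: i.*2 => [|t IH] //.
by rewrite run_succ run_eta rv /= IH; case: (odd t).
Qed.

Lemma held_succ i b : ~~ red b ->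
  held i.+1 b = first_port (d b) (fun j => pix (port b j) b == target i (port b j)).
Proof.
move=> /negbTE rb; rewrite /held doubleS run_succ run_eta rb /=.
by rewrite odd_double /= run_succ run_eta rb /= odd_double.
Qed.

Lemma run_odd i v : run i.*2.+1 v =
  PState (red v) (d v) i.*2.+1 (target i v) (accepted i v) (held i.+1 v).
Proof.
rewrite run_succ run_eta /= odd_double andbF; case rv: (red v) => /=.
  by rewrite (held_red _ rv) -(held_red i rv).
by rewrite held_succ ?rv.
Qed.

Lemma accepted_succ i r : red r ->
  accepted i.+1 r = (target i r < d r)%N &&
    (held i.+1 (port r (target i r)) == Some (pix (port r (target i r)) r)).
Proof.
by move=> rr; rewrite /accepted doubleS run_succ run_odd rr /= odd_double /= run_odd.
Qed.

Lemma target_succ i r : red r -> target i.+1 r =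
  if accepted i.+1 r || (d r <= target i r)%N then target i r else (target i r).+1.
Proof.
move=> rr; rewrite accepted_succ // /target doubleS run_succ run_odd rr /=.
by rewrite odd_double /= run_odd.
Qed.

Lemma held_target i b j : held i.+1 b = Some j ->
  pix (port b j) b = target i (port b j).
Proof.
case rb: (red b); first by rewrite held_red.
by rewrite held_succ ?rb // => /first_portP [_ /eqP].
Qed.

Lemma held_proposer i b j : held i b = Some j ->
  (j < d b)%N /\ target i (port b j) = pix (port b j) b.
Proof.
case: i => [|i] //; case rb: (red b); first by rewrite held_red.
move=> held_j; have := held_j; rewrite held_succ ?rb // => /first_portP [lt_jd].
set u := port b j => /eqP tu; split => //.
have ab : adj b u := adj_port lt_jd; have ru := blue_adj (negbT rb) ab.
have [lt_bu pbu] := pidxP (adj_sym ab).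
rewrite target_succ // accepted_succ //.
by rewrite -tu lt_bu pbu held_j pidx_port ?eqxx.
Qed.

Lemma target_step i r : red r -> (target i r <= target i.+1 r <= (target i r).+1)%N.
Proof. by move=> rr; rewrite target_succ //; case: ifP; rewrite leqnn ?leqnSn. Qed.

Lemma target_le_deg i r : red r -> (target i r <= d r)%N.
Proof.
move=> rr; elim: i => [|i IH] //; rewrite target_succ //.
by case: ifP => // /norP [_]; rewrite -ltnNge.
Qed.

Lemma acceptedE i r : red r -> accepted i r = (target i r < d r)%N &&
  (held i (port r (target i r)) == Some (pix (port r (target i r)) r)).
Proof.
move=> rr; case: i => [|i]; first by rewrite andbF.
rewrite target_succ //; case: ifP => [_ | /norP [/negbTE -> lt_td]].
  exact: accepted_succ.
rewrite -ltnNge in lt_td; case: ltnP => //= lt_sd; apply/esym/negbTE/eqP.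
(* Having just moved on, r did not propose to its new target in round i. *)
set b := port r (target i r).+1 => /held_target.
have [_ ->] := pidxP (adj_sym (adj_port lt_sd)).
by rewrite pidx_port // => /esym/n_Sn.
Qed.

Section Weights.
Hypothesis weights_ok : positive_weights adj w.

Local Notation w_port_le := (w_port_le ports_ok).

Lemma w_sym u v : adj u v -> w u v = w v u.
Proof. by move/weights_ok => []. Qed.

Lemma w_gt0 u v : adj u v -> 0 < w u v.
Proof. by move/weights_ok => []. Qed.

Definition held_w i v := if held i v is Some j then w v (port v j) else 0.
Definition target_w i r :=
  if (target i r < d r)%N then w r (port r (target i r)) else 0.
Definition passed_w i r := \sum_(0 <= j < target i r) held_w i (port r j).

Lemma held_w_ge0 i v : 0 <= held_w i v.
Proof.
rewrite /held_w; case E: (held i v) => [j|] //.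
by have [lt_jd _] := held_proposer E; exact/ltW/w_gt0/adj_port.
Qed.

Lemma target_w_ge0 i r : 0 <= target_w i r.
Proof. by rewrite /target_w; case: ifP => // /adj_port/w_gt0/ltW. Qed.

Lemma proposal_le_held i b j : ~~ red b -> (j < d b)%N ->
  pix (port b j) b = target i (port b j) -> w b (port b j) <= held_w i.+1 b.
Proof.
move=> rb lt_jd /eqP tj; rewrite /held_w held_succ //.
have [j' -> le_j'j] := first_port_le
  (p := fun j => pix (port b j) b == target i (port b j)) tj lt_jd.
exact: w_port_le.
Qed.

Lemma held_w_mono i v : held_w i v <= held_w i.+1 v.
Proof.
rewrite {1}/held_w; case E: (held i v) => [j|]; last exact: held_w_ge0.
have rv : ~~ red v by apply/negP => /(held_red i); rewrite E.
by have [lt_jd tj] := held_proposer E; apply: proposal_le_held; rewrite ?tj.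
Qed.

(* A red node only passes a port after being rejected there in favour of a
   proposal at least as heavy, and held weights never decrease. *)
Lemma passed_le_held i r b : red r -> adj r b -> (pix r b < target i r)%N ->
  w r b <= held_w i b.
Proof.
move=> rr arb; elim: i => [|i IH] // lt_pt.
case: (ltnP (pix r b) (target i r)) => [lt | ge].
  exact: le_trans (IH lt) (held_w_mono i b).
have /andP [_ le_ts] := target_step i rr.
have eq_pt : pix r b = target i r.
  by apply/eqP; rewrite eqn_leq ge -ltnS (leq_trans lt_pt).
have [lt_bd pbr] := pidxP (adj_sym arb).
rewrite w_sym //; move: (proposal_le_held (i := i) (red_adj rr arb) lt_bd).
by rewrite pbr; apply.
Qed.

Lemma target_w_mono i r : red r -> target_w i.+1 r <= target_w i r.
Proof.
move=> rr; rewrite {1}/target_w; case: ifP => lt_td; last exact: target_w_ge0.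
have /andP [le_t _] := target_step i rr.
by rewrite /target_w (leq_ltn_trans le_t lt_td); exact: w_port_le.
Qed.

Lemma accepted_heldE i r b :
  red r && accepted i r && (port r (target i r) == b) =
  if held i b is Some j then port b j == r else false.
Proof.
apply/idP/idP.
  case/andP=> /andP [rr]; rewrite acceptedE // => /andP [lt_td /eqP hb] /eqP <-.
  by rewrite hb; have [_ ->] := pidxP (adj_sym (adj_port lt_td)).
case E: (held i b) => [j|] // /eqP <-.
have rb : ~~ red b by apply/negP => /(held_red i); rewrite E.
have [lt_jd tj] := held_proposer E.
have abr := adj_port lt_jd; have rr := blue_adj rb abr.
have [lt_rd prb] := pidxP (adj_sym abr).
by rewrite rr acceptedE // tj lt_rd prb pidx_port // E !eqxx.
Qed.

Definition total_target i := \sum_(r | red r) target_w i r.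
Definition total_held i := \sum_v held_w i v.
Definition potential i := \sum_(r | red r) passed_w i r.

Definition matching_at i : {set V * V} :=
  [set e | red e.1 && accepted i e.1 && (port e.1 (target i e.1) == e.2)].

Lemma mweight_matching_at i : mweight w (matching_at i) = \sum_r \sum_b
  (if red r && accepted i r && (port r (target i r) == b) then w r b else 0).
Proof.
by rewrite pair_big /mweight big_mkcond; apply: eq_bigr => -[r b] _; rewrite inE.
Qed.

Lemma sum_pick (x : V) (F : V -> R) : \sum_y (if x == y then F y else 0) = F x.
Proof. by rewrite -big_mkcond (big_pred1 x) // => y; rewrite eq_sym. Qed.

Lemma mweight_matching_at_held i : mweight w (matching_at i) = total_held i.
Proof.
rewrite mweight_matching_at exchange_big; apply: eq_bigr => b _.
under eq_bigr => r _ do rewrite accepted_heldE.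
rewrite /held_w; case E: (held i b) => [j|]; last by rewrite big1.
have [lt_jd _] := held_proposer E.
by rewrite sum_pick w_sym // adj_sym // adj_port.
Qed.

Lemma mweight_matching_at_target i : mweight w (matching_at i) =
  \sum_(r | red r) (if accepted i r then target_w i r else 0).
Proof.
rewrite mweight_matching_at [RHS]big_mkcond; apply: eq_bigr => r _.
case rr: (red r); last by rewrite big1.
case acc: (accepted i r); last by rewrite big1.
by rewrite /= sum_pick /target_w; move: acc; rewrite acceptedE // => /andP [->].
Qed.

Lemma passed_w_step i r : red r ->
  passed_w i r + (if accepted i.+1 r then 0 else target_w i.+1 r) <= passed_w i.+1 r.
Proof.
move=> rr.
have grow m n : (m <= n)%N ->
    \sum_(0 <= j < m) held_w i (port r j) <= \sum_(0 <= j < n) held_w i.+1 (port r j).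
  move=> le_mn; apply: ler_sum_nat_widen => // j; first exact: held_w_mono.
  exact: held_w_ge0.
case acc: (accepted i.+1 r).
  by rewrite addr0 /passed_w target_succ // acc grow.
case: (leqP (d r) (target i r)) => [le_dt | lt_td].
  have t_same : target i.+1 r = target i r by rewrite target_succ // le_dt orbT.
  by rewrite /target_w /passed_w t_same ltnNge le_dt addr0 grow.
have t_succ : target i.+1 r = (target i r).+1.
  by rewrite target_succ // acc leqNgt lt_td.
rewrite /passed_w t_succ big_nat_recr //= lerD ?grow //.
have le_w : target_w i.+1 r <= w r (port r (target i r)).
  rewrite /target_w t_succ; case: ifP => [lt_sd | _]; first exact: w_port_le.
  exact/ltW/w_gt0/adj_port.
apply: le_trans le_w (passed_le_held (i := i.+1) rr (adj_port lt_td) _).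
by rewrite pidx_port // t_succ.
Qed.

Lemma potential_ge i : i%:R * (total_target i - total_held i) <= potential i.
Proof.
elim: i => [|i IH].
  by rewrite mul0r /potential big1 // => r _; rewrite /passed_w -[target 0 r]/0%N big_geq.
rewrite -natr1 mulrDl mul1r.
apply: le_trans (lerD (le_trans _ IH) (lexx (total_target i.+1 - total_held i.+1))) _.
  rewrite ler_wpM2l ?ler0n // lerB ?ler_sum // => [r /target_w_mono // | v _].
  exact: held_w_mono.
rewrite /total_target -mweight_matching_at_held mweight_matching_at_target.
rewrite -sumrB /potential -big_split ler_sum //= => r rr.
apply: le_trans (passed_w_step i rr).
by rewrite lerD2l; case: ifP; rewrite ?subrr ?subr0.
Qed.

Lemma potential_le D i : max_degree_le adj D -> potential i <= D%:R * total_held i.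
Proof.
move=> deg_le; apply: (@le_trans _ _ (\sum_r \sum_(b | adj r b) held_w i b)).
  rewrite [leLHS]big_mkcond ler_sum //= => r _.
  case: ifP => rr; last by rewrite sumr_ge0 // => b _; exact: held_w_ge0.
  rewrite -(sum_ports ports_ok) -(big_mkord xpredT (fun j => held_w i (port r j))).
  by apply: ler_sum_nat_widen => [|//|j]; [exact: target_le_deg | exact: held_w_ge0].
rewrite (exchange_big_dep xpredT) //= /total_held mulr_sumr ler_sum // => b _.
have -> : \sum_(r | adj r b) held_w i b = held_w i b *+ d b.
  rewrite -sumr_const /deg; apply: eq_bigl => r.
  by rewrite !inE; apply/idP/idP => /adj_sym.
by rewrite -[_ *+ _]mulr_natl ler_wpM2r ?held_w_ge0 ?ler_nat.
Qed.

(* An edge (r, b) of any matching is either still ahead of r's pointer, and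
   then weighs at most r's current proposal, or already passed, and then at
   most what b holds; distinct edges charge distinct nodes. *)
Lemma matching_w_le i M : is_matching red adj M ->
  mweight w M <= total_target i + total_held i.
Proof.
move=> [edgeM uniqM].
apply: (@le_trans _ _ (\sum_(e in M) (target_w i e.1 + held_w i e.2))).
  apply: ler_sum => -[r b] eM; have [/= rr _ arb] := edgeM _ eM.
  case: (ltnP (pix r b) (target i r)) => [lt_pt | le_tp].
    by rewrite -[leLHS]add0r lerD ?target_w_ge0 ?passed_le_held.
  have [lt_pd pbr] := pidxP arb.
  rewrite -[leLHS]addr0 lerD ?held_w_ge0 // /target_w (leq_ltn_trans le_tp lt_pd).
  by rewrite -{1}pbr w_port_le.
rewrite big_split lerD //=.
  rewrite -(big_imset (fun r => target_w i r) (h := fst)) /=; last first.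
    by move=> e f eM fM ef; apply: uniqM => //; left.
  apply: ler_sum_subset; last exact: target_w_ge0.
  by move=> r /imsetP [e /edgeM [] ? _ _ ->].
rewrite -(big_imset (fun b => held_w i b) (h := snd)) /=; last first.
  by move=> e f eM fM ef; apply: uniqM => //; right.
by apply: ler_sum_subset => // b; exact: held_w_ge0.
Qed.

Lemma matching_at_is_matching i : is_matching red adj (matching_at i).
Proof.
split=> [[r b] | [r b] [r' b']]; rewrite !inE /=.
  case/andP=> /andP [rr]; rewrite acceptedE // => /andP [lt_td _] /eqP <-.
  by have art := adj_port lt_td; rewrite rr art (red_adj rr art).
case/andP=> /andP [rr]; rewrite acceptedE // => /andP [lt_td /eqP hb] /eqP <-.
case/andP=> /andP [rr']; rewrite acceptedE // => /andP [lt_td' /eqP hb'] /eqP <-.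
case=> [-> // | eq_b]; rewrite eq_b hb' in hb; case: hb => eq_pidx.
have [_ pr] := pidxP (adj_sym (adj_port lt_td)).
have [_ pr'] := pidxP (adj_sym (adj_port lt_td')).
by rewrite -{1}pr eq_b -eq_pidx pr' -eq_b.
Qed.

Lemma output_matching_at k :
  output_matching proposal_algorithm k.*2 red adj port = matching_at k.
Proof.
apply/setP=> -[r b]; rewrite !inE output_run /= run_eta /prop_out /=.
by rewrite -[p_accepted _]/(accepted k r); case: (red r); case: (accepted k r).
Qed.

Lemma output_consistent k : consistent_output proposal_algorithm k.*2 red adj port.
Proof.
have outE v : output proposal_algorithm k.*2 red adj port v =
    if red v then (if accepted k v then Some (target k v) else None) else held k v.
  by rewrite output_run run_eta.
move=> v i; rewrite !outE; case rv: (red v).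
  case acc: (accepted k v) => // -[<-]; move: acc.
  rewrite acceptedE // => /andP [lt_td /eqP hb]; split=> //.
  by rewrite (negbTE (red_adj rv (adj_port lt_td))).
move=> hv; have [lt_id tu] := held_proposer hv; split=> //.
have avu := adj_port lt_id; have ru := blue_adj (negbT rv) avu.
have [lt_ud pu] := pidxP (adj_sym avu).
by rewrite ru acceptedE // tu lt_ud pu hv pidx_port // eqxx.
Qed.

Lemma matching_at_approx (eps : R) D k M :
  max_degree_le adj D -> (0 < k)%N -> D%:R <= eps * k%:R ->
  is_matching red adj M -> mweight w M <= (2 + eps) * mweight w (matching_at k).
Proof.
move=> deg_le k_gt0 D_le matM; rewrite mweight_matching_at_held.
have := matching_w_le k matM; have := le_trans (potential_ge k) (potential_le k deg_le).
set A := total_target k; set H := total_held k => pot wM.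
have H_ge0 : 0 <= H by rewrite sumr_ge0 // => v _; exact: held_w_ge0.
have : k%:R * (A - H) <= k%:R * (eps * H).
  by apply: le_trans pot _; rewrite mulrA [k%:R * eps]mulrC ler_wpM2r.
rewrite ler_pM2l ?ltr0n // => AH; lra.
Qed.

End Weights.
End Run.

Lemma truncn_succ_itv (R : realType) (x : R) :
  0 <= x -> x < (Num.truncn x).+1%:R <= x + 1.
Proof. by move=> /truncn_itv /andP [le_tx ->]; rewrite -natr1 lerD2r. Qed.

Theorem theorem2 (R : realType) (eps : R) (Delta : nat) :
  0 < eps -> (1 <= Delta)%N ->
  exists (A : algorithm) (T : nat),
    (T%:R <= 4 + 2 * Delta%:R / eps :> R) /\
    forall (V : finType) (red : V -> bool) (adj : rel V) (w : V -> V -> R)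
           (port : V -> nat -> V),
      bicoloured_graph red adj ->
      positive_weights adj w ->
      max_degree_le adj Delta ->
      valid_ports adj w port ->
      [/\ consistent_output A T red adj port,
          is_matching red adj (output_matching A T red adj port) &
          forall Mstar : {set V * V}, is_matching red adj Mstar ->
            mweight w Mstar <= (2 + eps) * mweight w (output_matching A T red adj port)].
Proof.
move=> eps_gt0 _; set x := Delta%:R / eps.
have /truncn_succ_itv /andP [lt_xk le_kx] : 0 <= x by rewrite divr_ge0 // ltW.
set k := (Num.truncn x).+1 in lt_xk le_kx.
exists proposal_algorithm, k.*2; split.
  by rewrite -mul2n natrM -mulrA -/x; lra.
move=> V red adj w port graph_ok weights_ok deg_le ports_ok.
rewrite output_matching_at; split.
- exact: (output_consistent graph_ok ports_ok (k := k)).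
- exact: matching_at_is_matching graph_ok ports_ok _.
move=> M matM; apply: matching_at_approx => //.
by rewrite mulrC -ler_pdivrMr // ltW.
Qed.
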